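(* For all integers $k\geq 1$ and $n\geq 0$, \[ \sum_{i=0}^{n} f_{i}^{(k)} = \sum_{i=0}^{\lfloor n/(k+1) \rfloor} (-1)^{i} \binom{n-ik}{i}2^{n-i(k+1)}. \]
   Context: For an integer $k\geq 1$, the $k$-bonacci numbers $f_n^{(k)}$ ($n\in\mathbb{Z}$) are defined by $f_n^{(k)}=0$ for $n<0$, $f_0^{(k)}=1$, and $f_n^{(k)}=\sum_{i=1}^{k} f_{n-i}^{(k)}$ for $n\geq 1$. Here $\lfloor x\rfloor$ denotes the floor function. *)

From mathcomp Require Import all_boot all_order all_algebra.
Set Implicit Arguments. Unset Strict Implicit. Unset Printing Implicit Defensive.
Import GRing.Theory Num.Theory.

(* kbon_list k n = [:: f_n; f_{n-1}; ...; f_0] (k-bonacci numbers, f_m = 0 for m < 0) *)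
Fixpoint kbon_list (k n : nat) : seq nat :=
  match n with
  | 0 => [:: 1]
  | n'.+1 => let l := kbon_list k n' in
             (\sum_(i < k) nth 0 l i)%N :: l
  end.

Definition kbon (k n : nat) : nat := head 0 (kbon_list k n).

Definition kbonZ (k : nat) (n : int) : nat :=
  match n with Posz m => kbon k m | Negz _ => 0 end.

Lemma kbon0 k : kbon k 0 = 1. Proof. by []. Qed.

Lemma kbon_list_nth k n j : j <= n -> nth 0 (kbon_list k n) j = kbon k (n - j).
Proof.
elim: n j => [|n IH] [|j] //= Hj; rewrite IH //.
Qed.

Example kbon_tri : [seq kbon 3 i | i <- iota 0 7] = [:: 1; 1; 2; 4; 7; 13; 24]. Proof. by rewrite /kbon /= !(big_ord_recl, big_ord0). Qed.
Example kbon_fib : [seq kbon 2 i | i <- iota 0 6] = [:: 1; 1; 2; 3; 5; 8]. Proof. by rewrite /kbon /= !(big_ord_recl, big_ord0). Qed.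
Example kbon_one : [seq kbon 1 i | i <- iota 0 4] = [:: 1; 1; 1; 1]. Proof. by rewrite /kbon /= !(big_ord_recl, big_ord0). Qed.

(* Both sides, as functions s of n, equal 2^n for n <= k and satisfy
   s(n+k+1) + s(n) = 2 s(n+k), hence coincide.  For the partial sums of the
   k-bonacci numbers the recurrence is f_(n+k+1) = s(n+k) - s(n); for the
   binomial sum it holds termwise, by Pascal's rule. *)

From mathcomp Require Import all_boot all_order all_algebra.
From mathcomp Require Import zify ring.
Import GRing.Theory Num.Theory.

Lemma sumn_take (s : seq nat) k : sumn (take k s) = \sum_(0 <= i < k) nth 0 s i.
Proof.
elim: s k => [|x s IH] k; first by rewrite big1 // => i _; rewrite nth_nil.
by case: k => [|k]; [rewrite big_geq | rewrite /= big_nat_recl // IH].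
Qed.

Lemma kbon_listE k n : kbon_list k n = rev (mkseq (kbon k) n.+1).
Proof. by elim: n => [|n IH] //; rewrite mkseqS rev_rcons -IH. Qed.

Lemma kbon_succ k n : kbon k n.+1 = \sum_(n.+1 - k <= i < n.+1) kbon k i.
Proof.
transitivity (\sum_(i < k) nth 0 (kbon_list k n) i); first by [].
rewrite -(big_mkord xpredT) -sumn_take kbon_listE take_rev size_mkseq sumn_rev.
by rewrite -map_drop drop_iota add0n sumnE big_map.
Qed.

Definition kbon_psum k n := \sum_(0 <= i < n.+1) kbon k i.

Lemma kbon_psum_small k n : n <= k -> kbon_psum k n = 2 ^ n.
Proof.
elim: n => [|n IH] lt_nk; first by rewrite /kbon_psum big_nat1.
rewrite /kbon_psum big_nat_recr //= kbon_succ.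
have -> : n.+1 - k = 0 by lia.
by rewrite -/(kbon_psum k n) (IH (ltnW lt_nk)) expnS mul2n -addnn.
Qed.

Lemma kbon_psum_rec k m :
  kbon_psum k (m + k).+1 + kbon_psum k m = 2 * kbon_psum k (m + k).
Proof.
rewrite {1}/kbon_psum big_nat_recr //= kbon_succ -/(kbon_psum k (m + k)).
have -> : (m + k).+1 - k = m.+1 by lia.
rewrite [kbon_psum k (m + k)](@big_cat_nat _ _ _ m.+1) //= -/(kbon_psum k m); lia.
Qed.

Local Open Scope ring_scope.

Definition binom_term k n i : int :=
  (-1) ^+ i * ('C(n - i * k, i))%:Z * (2 ^ (n - i * k.+1))%:Z.

Lemma binom_term_eq0 k n i : (n < i * k.+1)%N -> binom_term k n i = 0.
Proof.
move=> lt_n_ik; rewrite /binom_term bin_small ?mulr0 ?mul0r //.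
by case: i lt_n_ik => [|i]; rewrite ?mulSn; lia.
Qed.

Lemma binom_termE k i d :
  binom_term k (i * k.+1 + d) i = (-1) ^+ i * ('C(d + i, i))%:Z * (2 ^ d)%:Z.
Proof. by rewrite /binom_term addKn mulnS addnAC addnK addnC. Qed.

Lemma binom_term_rec k m i :
  binom_term k (m + k).+1 i.+1 + binom_term k m i = binom_term k (m + k) i.+1 *+ 2.
Proof.
have [lt_m_ik | le_ik_m] := ltnP m (i * k.+1).
  by rewrite !binom_term_eq0 ?addr0 ?mul0rn // mulSn; lia.
have [d ->{m le_ik_m}] : exists d, m = (i * k.+1 + d)%N by exists (m - i * k.+1)%N; lia.
have -> : ((i * k.+1 + d + k).+1 = i.+1 * k.+1 + d)%N by rewrite mulSn; lia.
rewrite !binom_termE addnS binS exprS PoszD.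
case: d => [|d].
  rewrite binom_term_eq0 ?mul0rn; last by rewrite mulSn; lia.
  by rewrite add0n bin_small //; ring.
have -> : (i * k.+1 + d.+1 + k = i.+1 * k.+1 + d)%N by rewrite mulSn; lia.
by rewrite binom_termE addSnnS exprS expnS PoszM; ring.
Qed.

Definition binom_sum k n := \sum_(0 <= i < (n %/ k.+1).+1) binom_term k n i.

Lemma binom_sum_widen k n N :
  (n < N)%N -> \sum_(0 <= i < N) binom_term k n i = binom_sum k n.
Proof.
move=> lt_nN; have le_qN : ((n %/ k.+1).+1 <= N)%N by rewrite (leq_ltn_trans (leq_div _ _)).
rewrite (big_cat_nat (leq0n _) le_qN) /= [X in _ + X]big_nat_cond [X in _ + X]big1 ?addr0 //.
by move=> i /andP[/andP[+ _] _]; rewrite ltn_divLR // => /binom_term_eq0.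
Qed.

Lemma binom_sum_small k n : (n <= k)%N -> binom_sum k n = (2 ^ n)%:Z.
Proof.
move=> le_nk; rewrite /binom_sum divn_small ?ltnS // big_nat1.
by rewrite /binom_term !mul0n !subn0 bin0 mulr1 mul1r.
Qed.

Lemma binom_sum_rec k m :
  binom_sum k (m + k).+1 + binom_sum k m = binom_sum k (m + k) *+ 2.
Proof.
rewrite -(@binom_sum_widen k (m + k).+1 (m + k).+2) //.
rewrite -(@binom_sum_widen k (m + k) (m + k).+2) //.
rewrite -(@binom_sum_widen k m (m + k).+1) ?ltnS ?leq_addr //.
rewrite big_nat_recl // [in RHS]big_nat_recl // -addrA -big_split /=.
under eq_bigr => i _ do rewrite binom_term_rec.
rewrite sumrMnl mulrnDl; congr (_ + _).
by rewrite /binom_term !mul0n !subn0 !bin0 expnS PoszM; ring.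
Qed.

Lemma eq_from_recurrence (V : zmodType) k (u v : nat -> V) :
  (forall n, (n <= k)%N -> u n = v n) ->
  (forall m, u (m + k).+1 + u m = u (m + k) *+ 2) ->
  (forall m, v (m + k).+1 + v m = v (m + k) *+ 2) ->
  u =1 v.
Proof.
move=> init rec_u rec_v; elim/ltn_ind => n IH.
have [le_nk | lt_kn] := leqP n k; first exact: init.
have -> : n = ((n - k.+1) + k).+1 by rewrite addnC -addSn subnKC.
apply: (addIr (u (n - k.+1)%N)).
by rewrite rec_u !IH ?rec_v //; lia.
Qed.

Theorem theorem2p2 (k n : nat) : (1 <= k)%N ->
  (\sum_(0 <= i < n.+1) (kbon k i)%:Z : int) =
  \sum_(0 <= i < (n %/ k.+1).+1)
     (-1) ^+ i * ('C(n - i * k, i))%:Z * (2 ^ (n - i * k.+1))%:Z.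
Proof.
move=> _; rewrite -(big_morph Posz PoszD (erefl 0%Z)) -/(kbon_psum k n).
apply: (@eq_from_recurrence _ k (fun n => (kbon_psum k n)%:Z) (binom_sum k)).
- by move=> j le_jk; rewrite kbon_psum_small // binom_sum_small.
- by move=> m; rewrite -PoszD kbon_psum_rec mul2n -addnn PoszD mulr2n.
- exact: binom_sum_rec.
Qed.
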